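(* Let $(X,\tau_X)$ be a locally compact space and $(Y,\mathcal{V})$ a Hausdorff uniform space, and equip $\mathcal{C}(X,Y)$, the set of continuous point-compact multifunctions from $X$ to $Y$, with the topology of uniform convergence $\tau_{uc}$. Let $\mathcal{F}\subset\mathcal{C}(X,Y)$ be pointwise relatively compact and equicontinuous. Then the following are equivalent: (C1) $\mathcal{F}$ is relatively $\tau_{uc}$-compact; (C2) $\mathcal{F}$ satisfies the finite extension property; (C3) $\mathcal{F}$ satisfies the compact extension property.
   Context: A multifunction $f:X\to Y$ assigns to each $x$ a nonempty $f(x)\subset Y$; it is point-compact if each $f(x)$ is compact. For $V\subset Y\times Y$, $V[a]=\{w:(a,w)\in V\}$, $V[A]=\bigcup_{a\in A}V[a]$, $f(A)=\bigcup_{a\in A}f(a)$; entourages are taken symmetric. $f$ is upper semi-continuous if for each $x$ and open $W\supset f(x)$ there is an open $U_x\ni x$ with $f(U_x)\subset W$; lower semi-continuous if for each $x$ and open $W$ with $f(x)\cap W\neq\emptyset$ there is an open $U_x\ni x$ with $f(u)\cap W\neq\emptyset$ for all $u\in U_x$; continuous if both. For $V\in\mathcal{V}$ and $D\subset X$ let $$V^{\dagger}_D=\{(f,g):\ \forall x\in D\ \forall y\in f(x)\ \forall z\in g(x):\ (\{y\}\times g(x))\cap V\neq\emptyset,\ (f(x)\times\{z\})\cap V\neq\emptyset\},$$ and $V^\dagger=V^\dagger_X$. The sets $V^\dagger$ form a base of the uniformity of uniform convergence, inducing $\tau_{uc}$. The uniformity of pointwise convergence $\mathcal{W}_{pc}$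 on $\mathcal{F}$ has subbase the sets $V^\dagger_{\{x\}}\cap(\mathcal{F}\times\mathcal{F})$ ($x\in X$, $V\in\mathcal{V}$); the uniformity of uniform convergence on compacta $\mathcal{W}_{ucc}$ on $\mathcal{F}$ has base the sets $V^\dagger_D\cap(\mathcal{F}\times\mathcal{F})$ ($D\subset X$ compact, $V\in\mathcal{V}$). $\mathcal{F}$ is pointwise relatively compact if $\bigcup\{f(x):f\in\mathcal{F}\}$ is relatively compact in $Y$ for each $x$. $\mathcal{F}$ is equicontinuous if for every $x\in X$ and $V\in\mathcal{V}$ there is an open $U_x\ni x$ such that for all $f\in\mathcal{F}$: $f(U_x)\subset V[f(x)]$, and $f(u)\cap V[y]\neq\emptyset$ for all $u\in U_x$, $y\in f(x)$. $\mathcal{F}$ has the finite (resp. compact) extension property if for every $V\in\mathcal{V}$ there is $W\in\mathcal{W}_{pc}$ (resp. $W\in\mathcal{W}_{ucc}$) with $W\subset V^\dagger\cap(\mathcal{F}\times\mathcal{F})$. Relatively $\tau_{uc}$-compact means the $\tau_{uc}$-closure of $\mathcal{F}$ in $\mathcal{C}(X,Y)$ is compact. *)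

From HB Require Import structures.
From mathcomp Require Import all_boot all_order all_algebra.
From mathcomp Require Import finmap.
From Stdlib Require List.
From mathcomp Require Import all_classical all_reals all_analysis.
Set Implicit Arguments. Unset Strict Implicit. Unset Printing Implicit Defensive.
Local Open Scope classical_set_scope.

(* A multifunction X -> Y is represented by its set-valued function;
   nonemptiness of values is part of membership in C(X,Y). *)

Definition mf_image {X Y : Type} (f : X -> set Y) (A : set X) : set Y :=
  \bigcup_(a in A) f a.

Definition mf_usc {X Y : topologicalType} (f : X -> set Y) : Prop :=
  forall (x : X) (W : set Y), open W -> f x `<=` W ->
    exists U : set X, [/\ open U, U x & mf_image f U `<=` W].

Definition mf_lsc {X Y : topologicalType} (f : X -> set Y) : Prop :=
  forall (x : X) (W : set Y), open W -> f x `&` W !=set0 ->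
    exists U : set X, [/\ open U, U x & forall u, U u -> f u `&` W !=set0].

Definition CXY (X Y : topologicalType) : set (X -> set Y) :=
  [set f | [/\ (forall x, f x !=set0), (forall x, compact (f x)),
              mf_usc f & mf_lsc f]].

Arguments CXY : clear implicits.

Definition sym_ent {Y : uniformType} (V : set (Y * Y)) : Prop :=
  entourage V /\ (forall a b, V (a, b) -> V (b, a)).

Definition ent_sec {Y : Type} (V : set (Y * Y)) (a : Y) : set Y :=
  [set w | V (a, w)].

Definition dagger {X Y : Type} (V : set (Y * Y)) (D : set X) :
  set ((X -> set Y) * (X -> set Y)) :=
  [set fg | forall x, D x ->
      (forall y, fg.1 x y -> exists z, fg.2 x z /\ V (y, z)) /\
      (forall z, fg.2 x z -> exists y, fg.1 x y /\ V (y, z))].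

Definition sqF {X Y : Type} (F : set (X -> set Y)) :
  set ((X -> set Y) * (X -> set Y)) := F `*` F.

(* uniformity of pointwise convergence on F: generated by the subbase
   V^dagger_{x} /\ FxF (x in X, V symmetric entourage) *)
Definition W_pc {X : Type} {Y : uniformType} (F : set (X -> set Y))
  : set (set ((X -> set Y) * (X -> set Y))) :=
  [set W | W `<=` sqF F /\
    exists s : seq (X * set (Y * Y)),
      (forall p, List.In p s -> sym_ent p.2) /\
      (sqF F `&` [set fg | forall p, List.In p s -> dagger p.2 [set p.1] fg])
        `<=` W].

(* uniformity of uniform convergence on compacta on F: base
   V^dagger_D /\ FxF (D compact, V symmetric entourage) *)
Definition W_ucc {X : topologicalType} {Y : uniformType}
  (F : set (X -> set Y)) : set (set ((X -> set Y) * (X -> set Y))) :=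
  [set W | W `<=` sqF F /\
    exists (D : set X) (V : set (Y * Y)),
      [/\ compact D, sym_ent V & sqF F `&` dagger V D `<=` W]].

Definition finite_extension_property {X : Type} {Y : uniformType}
  (F : set (X -> set Y)) : Prop :=
  forall V, sym_ent V -> exists W, W_pc F W /\ W `<=` dagger V setT `&` sqF F.

Definition compact_extension_property {X : topologicalType} {Y : uniformType}
  (F : set (X -> set Y)) : Prop :=
  forall V, sym_ent V -> exists W, W_ucc F W /\ W `<=` dagger V setT `&` sqF F.

Definition pointwise_rel_compact {X : Type} {Y : topologicalType}
  (F : set (X -> set Y)) : Prop :=
  forall x, compact (closure (\bigcup_(f in F) f x)).

Definition mf_equicontinuous {X : topologicalType} {Y : uniformType}
  (F : set (X -> set Y)) : Prop :=
  forall (x : X) (V : set (Y * Y)), sym_ent V ->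
    exists U : set X, [/\ open U, U x &
      forall f, F f ->
        mf_image f U `<=` mf_image (ent_sec V) (f x) /\
        (forall u y, U u -> f x y -> f u `&` ent_sec V y !=set0)].

(* the topology tau_uc on C(X,Y), induced by the uniformity with base the
   V^dagger (V symmetric entourage), written out explicitly *)
Definition uc_open {X : topologicalType} {Y : uniformType}
  (O : set (X -> set Y)) : Prop :=
  O `<=` CXY X Y /\
  forall g, O g -> exists V, sym_ent V /\
    forall h, CXY X Y h -> dagger V setT (g, h) -> O h.

Definition uc_closure {X : topologicalType} {Y : uniformType}
  (F : set (X -> set Y)) : set (X -> set Y) :=
  [set g | CXY X Y g /\
     forall O, uc_open O -> O g -> O `&` F !=set0].

Definition uc_compact {X : topologicalType} {Y : uniformType}
  (K : set (X -> set Y)) : Prop :=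
  K `<=` CXY X Y /\
  forall (I : choiceType) (O : I -> set (X -> set Y)),
    (forall i, uc_open (O i)) -> K `<=` \bigcup_(i in setT) O i ->
    exists D : {fset I}, K `<=` \bigcup_(i in [set` D]) O i.

Definition rel_uc_compact {X : topologicalType} {Y : uniformType}
  (F : set (X -> set Y)) : Prop := uc_compact (uc_closure F).

From HB Require Import structures.
From mathcomp Require Import all_boot all_order all_algebra.
From mathcomp Require Import finmap.
From Stdlib Require List.
From mathcomp Require Import all_classical all_reals all_analysis.
Local Open Scope classical_set_scope.

(* (C2) and (C3) are equivalent because finite sets are compact and, conversely,
   equicontinuity covers a compact set by finitely many neighbourhoods on which
   every member of F moves by less than a third of the entourage, so closeness
   at their centres gives closeness on the whole compact set.
   Under (C1) the closure has a finite net; for each pair of net members that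
   are not uniformly close record one point where they are apart.  Closeness of
   f, g in F at these finitely many points makes their approximants in the net
   uniformly close, hence f and g too, which is (C2).
   For (C2) => (C1) take an ultrafilter on F: pointwise relative compactness
   makes its pointwise limit point-compact, (C2) makes the convergence uniform,
   and a uniform limit of continuous multifunctions is continuous, so every
   ultrafilter on F converges to a point of the closure. *)

Section SymmetricEntourages.
Context {Y : uniformType}.
Implicit Types V W : set (Y * Y).

Lemma sym_ent_refl {V} a : sym_ent V -> V (a, a).
Proof. by case=> eV _; exact: entourage_refl. Qed.

Lemma sym_entT : sym_ent [set: Y * Y].
Proof. by split => //; exact: entourageT. Qed.

Lemma sym_entI {V W} : sym_ent V -> sym_ent W -> sym_ent (V `&` W).
Proof. by move=> [eV sV] [eW sW]; split=> [|a b [/sV ? /sW ?]]; [exact: filterI|]. Qed.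

Definition half_ent V : set (Y * Y) := split_ent V `&` (split_ent V)^-1%relation.

Lemma sym_half_ent {V} : entourage V -> sym_ent (half_ent V).
Proof.
by move=> eV; split=> [|a b [? ?]]; [exact/entourage_invI/entourage_split_ent|].
Qed.

Lemma half_ent_trans {V a b c} : entourage V ->
  half_ent V (a, b) -> half_ent V (b, c) -> V (a, c).
Proof. by move=> eV [ab _] [bc _]; exact: entourage_split ab bc. Qed.

Lemma half_ent_sub {V} : entourage V -> half_ent V `<=` V.
Proof. by move=> eV ? [+ _]; exact: split_ent_subset. Qed.

Definition third_ent V := half_ent (half_ent V).

Lemma sym_third_ent {V} : entourage V -> sym_ent (third_ent V).
Proof. by move=> eV; apply: sym_half_ent; case: (sym_half_ent eV). Qed.

Lemma third_ent_sub {V} : entourage V -> third_ent V `<=` V.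
Proof.
move=> eV; have [eV2 _] := sym_half_ent eV.
by move=> p /(half_ent_sub eV2) /(half_ent_sub eV).
Qed.

Lemma third_ent_trans {V a b c d} : entourage V ->
  third_ent V (a, b) -> third_ent V (b, c) -> third_ent V (c, d) -> V (a, d).
Proof.
move=> eV ab bc cd; have [eV2 _] := sym_half_ent eV.
exact: half_ent_trans eV (half_ent_trans eV2 ab bc) (half_ent_sub eV2 _ cd).
Qed.

End SymmetricEntourages.

Lemma compact_open_entourage {Y : uniformType} {C W : set Y} :
  compact C -> open W -> C `<=` W ->
  exists2 E, entourage E & forall y w, C y -> E (y, w) -> W w.
Proof.
move=> /compact_near_coveringP cC oW CW.
pose small := filter_from (@entourage Y) (fun E => [set E' | E' `<=` E]).
have small_filter : Filter small.
  apply: filter_from_filter; first by exists setT; exact: entourageT.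
  move=> E1 E2 e1 e2; exists (E1 `&` E2); first exact: filterI.
  by move=> E' sE'; split => p /sE' [].
have [|E eE smallE] := cC _ small (fun E y => forall w, E (y, w) -> W w) small_filter.
  move=> y Cy; have /nbhsP [E0 eE0 sE0] : nbhs y W.
    by apply: open_nbhs_nbhs; split => //; exact: CW.
  exists (xsection (split_ent E0) y, [set E | E `<=` split_ent E0]).
    by split; [exact: nbhs_entourage | exists (split_ent E0)].
  case=> y' E /= [/xsectionP yy' sE] w /sE y'w.
  by apply: sE0; apply/xsectionP; exact: entourage_split yy' y'w.
by exists E => // y w Cy; exact: smallE.
Qed.

Section Dagger.
Context {X Y : Type}.
Implicit Types (V : set (Y * Y)) (D : set X) (f g h : X -> set Y).

Lemma dagger_sub {V V' D D' fg} :
  V `<=` V' -> D' `<=` D -> dagger V D fg -> dagger V' D' fg.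
Proof.
move=> sV sD dfg x /sD /dfg [fg1 fg2].
by split=> [y /fg1 [z [? /sV ?]]|z /fg2 [y [? /sV ?]]]; [exists z|exists y].
Qed.

Lemma dagger_refl {V D f} : (forall a, V (a, a)) -> dagger V D (f, f).
Proof. by move=> rV x _; split => y fy; exists y. Qed.

Lemma dagger_sym {V D f g} :
  (forall a b, V (a, b) -> V (b, a)) -> dagger V D (f, g) -> dagger V D (g, f).
Proof.
move=> sV dfg x /dfg [fg1 fg2].
by split=> [y /fg2 [z [? /sV ?]]|z /fg1 [y [? /sV ?]]]; [exists z|exists y].
Qed.

Lemma dagger_trans {V1 V2 V3 D f g h} :
  (forall a b c, V1 (a, b) -> V2 (b, c) -> V3 (a, c)) ->
  dagger V1 D (f, g) -> dagger V2 D (g, h) -> dagger V3 D (f, h).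
Proof.
move=> V123 dfg dgh x Dx; have [fg1 fg2] := dfg x Dx; have [gh1 gh2] := dgh x Dx.
split=> [y /fg1 [z [/gh1 [w [hw zw]] yz]]|w /gh2 [z [/fg2 [y [fy yz]] zw]]].
  by exists w; split => //; exact: V123 yz zw.
by exists y; split => //; exact: V123 yz zw.
Qed.

End Dagger.

Section DaggerEntourages.
Context {X : Type} {Y : uniformType}.
Implicit Types (V : set (Y * Y)) (D : set X) (f g h k : X -> set Y).

Lemma dagger_half_trans {V D f g h} : entourage V ->
  dagger (half_ent V) D (f, g) -> dagger (half_ent V) D (g, h) -> dagger V D (f, h).
Proof. by move=> eV; apply: dagger_trans => a b c; exact: half_ent_trans. Qed.

Lemma dagger_third_trans {V D f g h k} : entourage V ->
  dagger (third_ent V) D (f, g) -> dagger (third_ent V) D (g, h) ->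
  dagger (third_ent V) D (h, k) -> dagger V D (f, k).
Proof.
move=> eV dfg dgh dhk; have [eV2 _] := sym_half_ent eV.
apply: dagger_half_trans eV (dagger_half_trans eV2 dfg dgh) _.
exact: dagger_sub (half_ent_sub eV2) _ dhk.
Qed.

End DaggerEntourages.

Section ExtensionProperties.
Context {X : Type} {Y : uniformType}.
Implicit Types (F : set (X -> set Y)) (V : set (Y * Y)).

Lemma dagger_points_subbase {s : seq (X * set (Y * Y))} :
  (forall p, List.In p s -> sym_ent p.2) ->
  exists (P : seq X) V, sym_ent V /\ forall fg,
    dagger V [set x | List.In x P] fg ->
    forall p, List.In p s -> dagger p.2 [set p.1] fg.
Proof.
elim: s => [_|p s IH sym_s]; first by exists [::], setT; split => //; exact: sym_entT.
have [|P [V [sV HV]]] := IH; first by move=> q sq; apply: sym_s; right.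
exists (p.1 :: P), (p.2 `&` V); split.
  by apply: sym_entI => //; apply: sym_s; left.
move=> fg dfg q [<-|sq]; first by apply: dagger_sub dfg => [? []|? ->] //; left.
by apply: HV sq; apply: dagger_sub dfg => [? []|? ?] //; right.
Qed.

Lemma finite_extension_propertyP F : finite_extension_property F <->
  forall V, sym_ent V -> exists (P : seq X) V', sym_ent V' /\
    sqF F `&` dagger V' [set x | List.In x P] `<=` dagger V setT.
Proof.
split=> [fep V /fep [W [[_ [s [sym_s sW]]] WV]]|fep V /fep [P [V' [sV' PV']]]].
  have [P [V' [sV' HV']]] := dagger_points_subbase sym_s.
  exists P, V'; split => // fg [Ffg dfg].
  by have [] := WV _ (sW _ (conj Ffg (HV' _ dfg))).
exists (sqF F `&` dagger V' [set x | List.In x P]); split; last first.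
  by move=> fg [Ffg dfg]; split => //; exact: PV'.
split=> [? []//|]; exists [seq (x, V') | x <- P]; split.
  by move=> p /List.in_map_iff [x [<- _]].
move=> fg [Ffg dfg]; split => // x Px.
exact: dfg (x, V') (List.in_map _ _ _ Px) x erefl.
Qed.

End ExtensionProperties.

Lemma compact_extension_propertyP {X : topologicalType} {Y : uniformType}
    (F : set (X -> set Y)) : compact_extension_property F <->
  forall V, sym_ent V -> exists (D : set X) V', [/\ compact D, sym_ent V' &
    sqF F `&` dagger V' D `<=` dagger V setT].
Proof.
split=> cep V /cep.
  move=> [W [[_ [D [V' [cD sV' DV']]]] WV]].
  by exists D, V'; split => // fg /DV' /WV [].
move=> [D [V' [cD sV' DV']]]; exists (sqF F `&` dagger V' D); split.
  by split=> [? []//|]; exists D, V'; split.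
by move=> fg [Ffg dfg]; split => //; exact: DV'.
Qed.

Lemma compact_points {X : topologicalType} (P : seq X) :
  compact [set x | List.In x P].
Proof.
elim: P => [|a P IH]; first exact: compact0.
have -> : [set x | List.In x (a :: P)] = [set a] `|` [set x | List.In x P].
  by apply/seteqP; split => x /= [] ?; by [left|right].
by apply: compactU => //; exact: compact_set1.
Qed.

Lemma fep_cep {X : topologicalType} {Y : uniformType} (F : set (X -> set Y)) :
  finite_extension_property F -> compact_extension_property F.
Proof.
move=> /finite_extension_propertyP fep; apply/compact_extension_propertyP => V /fep.
move=> [P [V' [sV' PV']]]; exists [set x | List.In x P], V'.
by split => //; exact: compact_points.
Qed.

Lemma compact_finite_centers {X : topologicalType} {D : set X} {U : X -> set X} :
  compact D -> (forall x, D x -> nbhs x (U x)) ->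
  exists P : seq X, forall x, D x -> exists2 i, List.In i P & U i x.
Proof.
move=> /compact_near_coveringP cD nU.
pose cofinal := filter_from [set: seq X]
  (fun P => [set Q | forall x, List.In x P -> List.In x Q]).
have cofinal_filter : Filter cofinal.
  apply: filter_from_filter => [|P1 P2 _ _]; first by exists [::].
  exists (P1 ++ P2) => // Q PQ.
  by split=> x Px; apply: PQ; apply: List.in_or_app; [left|right].
have [|P _ DP] :=
  cD _ cofinal (fun P x => exists2 i, List.In i P & U i x) cofinal_filter.
  move=> x Dx; exists (U x, [set Q | List.In x Q]).
    by split; [exact: nU | exists [:: x] => // Q; apply; left].
  by case=> x' Q /= [Ux' Qx]; exists x.
by exists P => x /(DP P) /=; apply.
Qed.

Lemma equicontinuous_dagger_points {X : topologicalType} {Y : uniformType}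
    {F : set (X -> set Y)} {D : set X} {V} :
  mf_equicontinuous F -> compact D -> entourage V ->
  exists P : seq X, forall f g, F f -> F g ->
    dagger (third_ent V) [set x | List.In x P] (f, g) -> dagger V D (f, g).
Proof.
move=> equi cD eV; have sV3 := sym_third_ent eV; have [_ symV3] := sV3.
have [U HU] := choice (fun x => equi x _ sV3).
have [P DP] : exists P : seq X, forall x, D x -> exists2 i, List.In i P & U i x.
  apply: compact_finite_centers cD _ => x _.
  by have [? ? _] := HU x; exact: open_nbhs_nbhs.
exists P => f g Ff Fg dfg x Dx.
have [i Pi Uix] := DP x Dx; have [_ _ equi_i] := HU i.
have [fUi fUi'] := equi_i f Ff; have [gUi gUi'] := equi_i g Fg.
have [dfg1 dfg2] := dfg i Pi.
split=> [y fxy|z gxz].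
- have [a fia ay] : mf_image (ent_sec (third_ent V)) (f i) y by apply: fUi; exists x.
  have [b [gib ab]] := dfg1 a fia; have [z [gxz bz]] := gUi' x b Uix gib.
  by exists z; split => //; exact: third_ent_trans eV (symV3 _ _ ay) ab bz.
- have [b gib bz] : mf_image (ent_sec (third_ent V)) (g i) z by apply: gUi; exists x.
  have [a [fia ab]] := dfg2 b gib; have [y [fxy ay]] := fUi' x a Uix fia.
  by exists y; split => //; exact: third_ent_trans eV (symV3 _ _ ay) ab bz.
Qed.

Lemma cep_fep {X : topologicalType} {Y : uniformType} (F : set (X -> set Y)) :
  mf_equicontinuous F -> compact_extension_property F -> finite_extension_property F.
Proof.
move=> equi /compact_extension_propertyP cep.
apply/finite_extension_propertyP => V /cep [D [V' [cD [eV' _] DV']]].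
have [P PD] := equicontinuous_dagger_points equi cD eV'.
exists P, (third_ent V'); split; first exact: sym_third_ent.
by move=> [f g] [[Ff Fg] dfg]; apply: DV'; split => //; exact: PD.
Qed.

Lemma dagger_points_detect {X Y : Type} (V : set (Y * Y))
    (s : seq ((X -> set Y) * (X -> set Y))) :
  exists P : seq X, forall fg, fg \in s ->
    dagger V [set x | List.In x P] fg -> dagger V setT fg.
Proof.
elim: s => [|fg s [P HP]]; first by exists [::].
have [close|far] := pselect (dagger V setT fg).
  by exists P => fg'; rewrite in_cons => /predU1P [->//|]; exact: HP.
have [x farx] : exists x, ~ dagger V [set x] fg.
  apply: contrapT => near_all; apply: far => x _.
  by apply: contrapT => farx; apply: near_all; exists x => /(_ x erefl).
exists (x :: P) => fg'; rewrite in_cons => /predU1P [->|s_fg'] dfg'.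
  by exfalso; apply: farx; apply: dagger_sub dfg' => // ? ->; left.
by apply: HP => //; apply: dagger_sub dfg' => // ? ?; right.
Qed.

Section UniformConvergenceTopology.
Context {X : topologicalType} {Y : uniformType}.
Implicit Types (V : set (Y * Y)) (F : set (X -> set Y)) (g : X -> set Y).

(* A dagger ball need not be uc_open; this is its uc-interior. *)
Definition uc_ball_interior V g : set (X -> set Y) :=
  [set k | CXY X Y k /\ exists2 W, sym_ent W &
     forall k', CXY X Y k' -> dagger W setT (k, k') -> dagger V setT (g, k')].

Lemma uc_open_ball_interior V g : uc_open (uc_ball_interior V g).
Proof.
split=> [k []//|k [Ck [W [eW _] HW]]].
exists (half_ent W); split=> [|h Ch dkh]; first exact: sym_half_ent.
split => //; exists (half_ent W); first exact: sym_half_ent.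
by move=> k' Ck' dhk'; apply: HW => //; exact: dagger_half_trans eW dkh dhk'.
Qed.

Lemma uc_ball_interior_center {V g} : sym_ent V -> CXY X Y g -> uc_ball_interior V g g.
Proof. by move=> sV Cg; split => //; exists V. Qed.

Lemma uc_ball_interior_dagger {V g k} : uc_ball_interior V g k -> dagger V setT (g, k).
Proof.
move=> [Ck [W sW HW]]; apply: HW => //.
by apply: dagger_refl => a; exact: sym_ent_refl.
Qed.

Lemma sub_uc_closure {F} : F `<=` CXY X Y -> F `<=` uc_closure F.
Proof. by move=> FC f Ff; split=> [|O _ Of]; [exact: FC | exists f]. Qed.

Lemma uc_closure_dagger {F g V} : uc_closure F g -> sym_ent V ->
  exists2 f, F f & dagger V setT (g, f).
Proof.
move=> [Cg clg] sV.
have [f [gf Ff]] := clg _ (uc_open_ball_interior V g) (uc_ball_interior_center sV Cg).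
by exists f => //; exact: uc_ball_interior_dagger.
Qed.

Lemma uc_closure_totally_bounded {F V} : rel_uc_compact F -> sym_ent V ->
  exists N : {fset X -> set Y}, forall h, uc_closure F h ->
    exists2 i, i \in N & dagger V setT (i, h).
Proof.
move=> [KC cK] sV.
have [|N cover] := cK _ (uc_ball_interior V) (uc_open_ball_interior V).
  by move=> h Kh; exists h => //; exact: uc_ball_interior_center (KC h Kh).
by exists N => h /cover [i Ni /uc_ball_interior_dagger]; exists i.
Qed.

Lemma rel_uc_compact_fep F : F `<=` CXY X Y -> rel_uc_compact F ->
  finite_extension_property F.
Proof.
move=> FC cF; apply/finite_extension_propertyP => V [eV _].
have [eV3 _] := sym_third_ent eV; have sV9 := sym_third_ent eV3.
have [_ symV9] := sV9; have sub93 := third_ent_sub eV3.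
have [N net] := uc_closure_totally_bounded cF sV9.
have [P detect] := dagger_points_detect (third_ent V) [seq (i, j) | i <- N, j <- N].
exists P, (third_ent (third_ent V)); split => // -[f g] [[Ff Fg] dfg].
have [i Ni dif] := net f (sub_uc_closure FC _ Ff).
have [j Nj djg] := net g (sub_uc_closure FC _ Fg).
have dij : dagger (third_ent V) setT (i, j).
  apply: detect; first exact: allpairs_f.
  apply: dagger_third_trans eV3 (dagger_sub _ _ dif) dfg _ => //.
  exact: dagger_sub (dagger_sym symV9 djg).
apply: dagger_third_trans eV _ dij (dagger_sub sub93 _ djg) => //.
exact: dagger_sub sub93 _ (dagger_sym symV9 dif).
Qed.

End UniformConvergenceTopology.

(* The lower limit of the values h x along U; along an ultrafilter it is also
   their upper limit. *)
Definition mf_lim {X : Type} {Y : uniformType} (U : set_system (X -> set Y)) :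
    X -> set Y := fun x =>
  [set y | forall E, entourage E -> U [set h | exists z, h x z /\ E (y, z)]].

Section PointwiseLimit.
Context {X : Type} {Y : uniformType}.
Context {F : set (X -> set Y)} {U : set_system (X -> set Y)}.
Hypotheses (UF : U F) (cF : pointwise_rel_compact F).

Lemma mf_lim_sub_closure x : ProperFilter U ->
  mf_lim U x `<=` closure (\bigcup_(f in F) f x).
Proof.
move=> PU y limy B /nbhsP [E eE EB].
have [h [[z [hz yz]] Fh]] := filter_ex (filterI (limy E eE) UF).
by exists z; split; [exists h | apply: EB; apply/xsectionP].
Qed.

Lemma closed_mf_lim x : Filter U -> closed (mf_lim U x).
Proof.
move=> FU y cly E eE.
have [y' [limy' /xsectionP yy']] := cly _ (nbhs_entourage y (entourage_split_ent eE)).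
apply: filterS (limy' _ (entourage_split_ent eE)) => h [z [hz y'z]].
by exists z; split => //; exact: entourage_split yy' y'z.
Qed.

Lemma compact_mf_lim x : ProperFilter U -> compact (mf_lim U x).
Proof.
move=> PU; apply: subclosed_compact (cF x) (mf_lim_sub_closure x PU).
exact: closed_mf_lim.
Qed.

Lemma mf_lim_lower x {V} : ProperFilter U -> entourage V ->
  U [set h | forall y, mf_lim U x y -> exists z, h x z /\ V (y, z)].
Proof.
move=> PU eV; have [eV2 symV2] := sym_half_ent eV.
apply: (proj1 (compact_near_coveringP _) (compact_mf_lim x PU)) => y limy.
exists (xsection (half_ent V) y, [set h | exists z, h x z /\ half_ent V (y, z)]).
  by split; [exact: nbhs_entourage | exact: limy].
case=> y' h /= [/xsectionP yy' [z [hz yz]]]; exists z; split => //.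
exact: half_ent_trans eV (symV2 _ _ yy') yz.
Qed.

Lemma mf_lim_upper x {V} : UltraFilter U -> entourage V ->
  U [set h | F h -> forall z, h x z -> exists y, mf_lim U x y /\ V (y, z)].
Proof.
move=> UU eV.
have : \forall h \near U, closure (\bigcup_(f in F) f x) `<=`
    [set w | h x w -> exists y, mf_lim U x y /\ V (y, w)].
  apply: (proj1 (compact_near_coveringP _) (cF x)) => w _.
  have [limw|nlimw] := pselect (mf_lim U x w).
    exists (xsection V w, setT).
      by split; [exact: nbhs_entourage | exact: filterT].
    by case=> w' h /= [/xsectionP ww' _] _; exists w.
  have [E eE nUE] : exists2 E, entourage E &
      ~ U [set h | exists z, h x z /\ E (w, z)].
    apply: contrapT => UE; apply: nlimw => E eE.
    by apply: contrapT => nUE; apply: UE; exists E.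
  have [//|UnE] := in_ultra_setVsetC [set h | exists z, h x z /\ E (w, z)] UU.
  exists (xsection E w, ~` [set h | exists z, h x z /\ E (w, z)]).
    by split; [exact: nbhs_entourage | exact: UnE].
  by case=> w' h /= [/xsectionP ww' nhw] hw'; case: nhw; exists w'.
apply: filterS => h Kh Fh z hz; apply: (Kh z) => //.
by apply: subset_closure; exists h.
Qed.

Lemma mf_lim_dagger_at x {V} : UltraFilter U -> entourage V ->
  U [set h | F h /\ dagger V [set x] (mf_lim U, h)].
Proof.
move=> UU eV; have PU := @ultra_proper _ _ UU.
apply: filterS (filterI UF (filterI (mf_lim_lower x PU eV) (mf_lim_upper x UU eV))).
by move=> h [Fh [lower upper]]; split => // _ ->; split => //; exact: upper.
Qed.

Lemma mf_lim_dagger_points (P : seq X) {V} : UltraFilter U -> entourage V ->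
  U [set h | F h /\ dagger V [set x | List.In x P] (mf_lim U, h)].
Proof.
move=> UU eV; elim: P => [|a P IH]; first by apply: filterS UF => h Fh; split.
apply: filterS (filterI (mf_lim_dagger_at a UU eV) IH).
by move=> h [[Fh da] [_ dP]]; split => // x [<-|Px]; [exact: da | exact: dP].
Qed.

Lemma mf_lim_uniform {V} :
  UltraFilter U -> finite_extension_property F -> entourage V ->
  U [set h | F h /\ dagger V setT (mf_lim U, h)].
Proof.
move=> UU /finite_extension_propertyP fep eV; have [eV2 _] := sym_half_ent eV.
have [P [V' [[eV' _] PV']]] := fep _ (sym_half_ent eV).
have [eV'2 symV'2] := sym_half_ent eV'.
pose A := [set h | F h /\ dagger (half_ent V') [set x | List.In x P] (mf_lim U, h)].
have UA : U A := mf_lim_dagger_points P UU eV'2.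
have closeA h1 h2 : A h1 -> A h2 -> dagger (half_ent V) setT (h1, h2).
  move=> [F1 d1] [F2 d2]; apply: PV'; split => //.
  exact: dagger_half_trans eV' (dagger_sym symV'2 d1) d2.
apply: filterS (UA) => h Ah; split=> [|x _]; first by case: Ah.
have [h' [Ah' [_ dx]]] := filter_ex (filterI UA (mf_lim_dagger_at x UU eV2)).
have dh'h : dagger (half_ent V) [set x] (h', h).
  exact: dagger_sub (closeA _ _ Ah' Ah).
exact: dagger_half_trans eV dx dh'h x erefl.
Qed.

End PointwiseLimit.

Section UniformLimit.
Context {X : topologicalType} {Y : uniformType}.
Implicit Types (g : X -> set Y) (F : set (X -> set Y)).

Lemma usc_uniform_limit g : (forall x, compact (g x)) ->
  (forall V, sym_ent V -> exists2 f, mf_usc f & dagger V setT (g, f)) -> mf_usc g.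
Proof.
move=> cg approx x W oW gW.
have [E eE EW] := compact_open_entourage (cg x) oW gW.
have [eE3 symE3] := sym_third_ent eE.
have [f uscf dgf] := approx _ (sym_third_ent eE).
have [||U [oU Ux fUW']] :=
  uscf x (\bigcup_(a in f x) interior (xsection (third_ent E) a)).
- by apply: bigcup_open => a _; exact: open_interior.
- by move=> a fa; exists a => //; exact: nbhs_entourage.
exists U; split => // y [u Uu gy].
have [z [fz yz]] := (dgf u I).1 y gy.
have [a fa /interior_subset /xsectionP az] := fUW' z (ex_intro2 _ _ u Uu fz).
have [b [gb ba]] := (dgf x I).2 a fa.
exact: EW b y gb (third_ent_trans eE ba az (symE3 _ _ yz)).
Qed.

Lemma lsc_uniform_limit g :
  (forall V, sym_ent V -> exists2 f, mf_lsc f & dagger V setT (g, f)) -> mf_lsc g.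
Proof.
move=> approx x W oW [y [gy Wy]].
have /nbhsP [E eE EW] : nbhs y W by exact: open_nbhs_nbhs.
have [eE3 symE3] := sym_third_ent eE.
have [f lscf dgf] := approx _ (sym_third_ent eE).
have [z [fz yz]] := (dgf x I).1 y gy.
have [|U [oU Ux fUmeets]] :=
  lscf x (interior (xsection (third_ent E) z)) (open_interior _).
  by exists z; split => //; exact: nbhs_entourage.
exists U; split => // u Uu.
have [z' [fz' /interior_subset /xsectionP zz']] := fUmeets u Uu.
have [y' [gy' y'z']] := (dgf u I).2 z' fz'.
exists y'; split => //; apply: EW; apply/xsectionP.
exact: third_ent_trans eE yz zz' (symE3 _ _ y'z').
Qed.

Lemma CXY_uniform_limit g : (forall x, compact (g x)) ->
  (forall V, sym_ent V -> exists2 f, CXY X Y f & dagger V setT (g, f)) -> CXY X Y g.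
Proof.
move=> cg approx; split => //.
- move=> x; have [f [ne _ _ _] dgf] := approx _ sym_entT.
  by have [z fz] := ne x; have [y [gy _]] := (dgf x I).2 z fz; exists y.
- by apply: usc_uniform_limit => // V /approx [f [_ _ ? _]]; exists f.
- by apply: lsc_uniform_limit => V /approx [f [_ _ _ ?]]; exists f.
Qed.

Lemma mf_lim_uc_closure F U : F `<=` CXY X Y -> pointwise_rel_compact F ->
  finite_extension_property F -> UltraFilter U -> U F -> uc_closure F (mf_lim U).
Proof.
move=> FC cF fep UU UF.
have approx V : sym_ent V -> exists2 f, F f & dagger V setT (mf_lim U, f).
  move=> [eV _]; have [f [Ff dgf]] := filter_ex (mf_lim_uniform UF cF UU fep eV).
  by exists f.
have Cg : CXY X Y (mf_lim U).
  apply: CXY_uniform_limit => [x|V /approx [f /FC Cf dgf]]; last by exists f.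
  exact: compact_mf_lim UF cF x (@ultra_proper _ _ UU).
split => // O [_ Oopen] Og; have [V [sV HV]] := Oopen _ Og.
by have [f Ff dgf] := approx V sV; exists f; split => //; exact: HV (FC f Ff) dgf.
Qed.

Definition near_uncovered {I : choiceType} F (O : I -> set (X -> set Y))
    (p : {fset I} * set (Y * Y)) : set (X -> set Y) :=
  [set f | F f /\ exists2 h,
     (uc_closure F `\` \bigcup_(i in [set` p.1]) O i) h & dagger p.2 setT (h, f)].

Lemma near_uncovered_proper {I : choiceType} F (O : I -> set (X -> set Y)) :
  (forall D : {fset I}, ~ uc_closure F `<=` \bigcup_(i in [set` D]) O i) ->
  ProperFilter (filter_from [set p | sym_ent p.2] (near_uncovered F O)).
Proof.
move=> nofin; apply: filter_from_proper; last first.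
  move=> [D V] /= sV.
  have [h [Kh nh]] : exists h, (uc_closure F `\` \bigcup_(i in [set` D]) O i) h.
    apply: contrapT => covered; apply: (nofin D) => h Kh.
    by apply: contrapT => nh; apply: covered; exists h.
  have [f Ff dhf] := uc_closure_dagger Kh sV.
  by exists f; split => //; exists h.
apply: filter_from_filter; first by exists (fset0, setT); exact: sym_entT.
move=> [D1 V1] [D2 V2] /= sV1 sV2.
exists ((D1 `|` D2)%fset, V1 `&` V2); first exact: sym_entI.
have uncoveredS D D' h : (D `<=` D')%fset ->
    ~ (\bigcup_(i in [set` D']) O i) h -> ~ (\bigcup_(i in [set` D]) O i) h.
  by move=> DD' nh [i Di Oi]; apply: nh; exists i => //; exact: (fsubsetP DD').
move=> f [Ff [h /= [Kh nh] dhf]]; split; split => //; exists h.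
- by split => //; apply: uncoveredS nh; exact: fsubsetUl.
- by apply: dagger_sub dhf => // ? [].
- by split => //; apply: uncoveredS nh; exact: fsubsetUr.
- by apply: dagger_sub dhf => // ? [].
Qed.

Lemma rel_uc_compact_ultra F :
  (forall U, UltraFilter U -> U F -> exists2 g, uc_closure F g &
     forall V, sym_ent V -> U [set h | dagger V setT (g, h)]) ->
  rel_uc_compact F.
Proof.
move=> ucvg; split=> [g []//|I O oO cover]; apply: contrapT => nofin.
have [U [UU GU]] : exists U, UltraFilter U /\
    filter_from [set p | sym_ent p.2] (near_uncovered F O) `<=` U.
  apply: ultraFilterLemma; apply: near_uncovered_proper => D sD.
  by apply: nofin; exists D.
have UF : U F by apply: GU; exists (fset0, setT) => [|f []//]; exact: sym_entT.
have [g Kg gU] := ucvg U UU UF.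
have [i0 _ Oi0g] := cover g Kg.
have [V [[eV _] HV]] := (oO i0).2 g Oi0g.
have [_ symV2] := sym_half_ent eV.
have Unear : U (near_uncovered F O ([fset i0]%fset, half_ent V)).
  by apply: GU; exists ([fset i0]%fset, half_ent V) => //; exact: sym_half_ent.
have [f [[_ [h [Kh nh] dhf]] dgf]] :=
  filter_ex (filterI Unear (gU _ (sym_half_ent eV))).
apply: nh; exists i0; first by rewrite /= inE.
apply: HV; first by case: Kh.
exact: dagger_half_trans eV dgf (dagger_sym symV2 dhf).
Qed.

Lemma fep_rel_uc_compact F : F `<=` CXY X Y -> pointwise_rel_compact F ->
  finite_extension_property F -> rel_uc_compact F.
Proof.
move=> FC cF fep; apply: rel_uc_compact_ultra => U UU UF.
exists (mf_lim U); first exact: mf_lim_uc_closure.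
by move=> V [eV _]; apply: filterS (mf_lim_uniform UF cF UU fep eV) => h [].
Qed.

End UniformLimit.

Theorem corollary3p3 (X : topologicalType) (Y : uniformType)
  (F : set (X -> set Y)) :
  locally_compact [set: X] -> hausdorff_space Y ->
  F `<=` CXY X Y -> pointwise_rel_compact F -> mf_equicontinuous F ->
  (rel_uc_compact F <-> finite_extension_property F) /\
  (finite_extension_property F <-> compact_extension_property F).
Proof.
move=> _ _ FC cF equi; split; split.
- exact: rel_uc_compact_fep.
- exact: fep_rel_uc_compact.
- exact: fep_cep.
- exact: cep_fep.
Qed.
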